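(* Let $\mathcal{H}$ be a complex separable Hilbert space and let $A$ be a bounded, positive, injective operator on $\mathcal{H}$ that is Hankel with respect to an isometry $V$, i.e. $V^*A = AV$. Then the Wold decomposition of $V$ has the form $V = V_0 \oplus J$ on $\mathcal{H} = \mathcal{H}_0 \oplus \mathcal{H}'$, where $V_0$ is a pure isometry on $\mathcal{H}_0$ and $J$ is a self-adjoint unitary on $\mathcal{H}' = \mathcal{H}'_+ \oplus \mathcal{H}'_-$ with $Jh = h$ for $h \in \mathcal{H}'_+$ and $Jh = -h$ for $h \in \mathcal{H}'_-$. The subspaces $\mathcal{H}_0$, $\mathcal{H}'_+$ and $\mathcal{H}'_-$ are each invariant under $A$. If in addition $AV > 0$, then $\mathcal{H}'_- = \{0\}$ and $J = I$.
   Context: An operator $T$ is positive, written $T>0$, if $\langle Tx,x\rangle \ge 0$ for all $x$ in its domain and $T$ is injective. A pure isometry is one unitarily equivalent to the unilateral shift $M_z$ on $H^2 \otimes \mathbb{C}^n$ for some $n$. The Wold decomposition writes an isometry as the orthogonal direct sum of its pure part and a unitary part. *)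

From HB Require Import structures.
From mathcomp Require Import all_boot all_order all_algebra.
From mathcomp Require Import complex reals.
Set Implicit Arguments. Unset Strict Implicit. Unset Printing Implicit Defensive.
Import Order.TTheory GRing.Theory Num.Theory.
Local Open Scope ring_scope.

Section Hilbert.
Variables (R : realType) (H : lmodType R[i]) (ip : H -> H -> R[i]).

Definition inner_product : Prop :=
  [/\ (forall (a : R[i]) (x y z : H), ip (a *: x + y) z = a * ip x z + ip y z),
      (forall x y : H, ip y x = (ip x y)^*),
      (forall x : H, 0 <= ip x x) &
      (forall x : H, ip x x = 0 -> x = 0)].

(* squared norm ||x||^2 = <x,x>; comparisons are in the (partial) order of R[i],
   where 0 < e forces e to be a positive real. *)
Definition nsq (x : H) : R[i] := ip x x.

Definition converges (u : nat -> H) (x : H) : Prop :=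
  forall e : R[i], 0 < e -> exists N, forall n, (N <= n)%N -> nsq (u n - x) < e.

Definition cauchy_seq (u : nat -> H) : Prop :=
  forall e : R[i], 0 < e -> exists N, forall m n, (N <= m)%N -> (N <= n)%N ->
    nsq (u m - u n) < e.

Definition complete_space : Prop :=
  forall u, cauchy_seq u -> exists x, converges u x.

Definition separable_space : Prop :=
  exists d : nat -> H, forall (x : H) (e : R[i]), 0 < e -> exists k, nsq (x - d k) < e.

Definition is_linear (T : H -> H) : Prop :=
  forall (a : R[i]) (x y : H), T (a *: x + y) = a *: T x + T y.

Definition bounded_op (T : H -> H) : Prop :=
  is_linear T /\ exists M : R[i], forall x, nsq (T x) <= M * nsq x.

Definition is_adjoint (T Ts : H -> H) : Prop :=
  forall x y, ip (T x) y = ip x (Ts y).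

Definition isometry_op (V : H -> H) : Prop :=
  bounded_op V /\ forall x, nsq (V x) = nsq x.

Definition positive_op (T : H -> H) : Prop :=
  (forall x, 0 <= ip (T x) x) /\ injective T.

Definition subspace (S : H -> Prop) : Prop :=
  S 0 /\ forall (a : R[i]) x y, S x -> S y -> S (a *: x + y).

Definition closed_set (S : H -> Prop) : Prop :=
  forall u x, (forall n, S (u n)) -> converges u x -> S x.

Definition closed_subspace (S : H -> Prop) : Prop := subspace S /\ closed_set S.

Definition orthogonal_sets (S T : H -> Prop) : Prop :=
  forall x y, S x -> T y -> ip x y = 0.

Definition invariant_set (T : H -> H) (S : H -> Prop) : Prop :=
  forall x, S x -> S (T x).

Definition in_closed_span (F : H -> Prop) (x : H) : Prop :=
  forall e : R[i], 0 < e -> exists s : seq (R[i] * H),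
    (forall p, p \in s -> F p.2) /\ nsq (x - \sum_(p <- s) p.1 *: p.2) < e.

(* V restricted to H0 is unitarily equivalent to the unilateral shift M_z on
   H^2 (x) C^n, n = #{i | P i} in {0,1,...,oo}: the unitary sends the orthonormal
   basis z^k (x) eps_i of H^2 (x) C^n to e k i. *)
Definition pure_isometry_on (V : H -> H) (H0 : H -> Prop) : Prop :=
  exists (P : nat -> Prop) (e : nat -> nat -> H),
    [/\ (forall k i l j, P i -> P j ->
           ip (e k i) (e l j) = if (k == l) && (i == j) then 1 else 0),
        (forall k i, P i -> V (e k i) = e k.+1 i) &
        (forall x, H0 x <-> in_closed_span (fun y => exists k i, P i /\ y = e k i) x)].

End Hilbert.

From Pilot Require Import Defs.
From HB Require Import structures.
From mathcomp Require Import all_boot all_order all_algebra.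
From mathcomp Require Import complex reals.
From mathcomp Require Import ring lra.
From mathcomp Require Import classical_sets.
Import Order.TTheory GRing.Theory Num.Theory.
Local Open Scope ring_scope.
Set Implicit Arguments. Unset Strict Implicit.

(* The projections Q_n = V^n V^*n onto ran V^n decrease, so Q_n x converges to
   some y in the unitary part, while x - y lies in the closed span of the
   shifted copies V^k L of the wandering subspace L = ker V^*; Gram-Schmidt on
   the projections onto L of a dense sequence gives an orthonormal basis of L,
   hence the shift structure of the pure part. The Hankel relation V^* A = A V
   makes k |-> <A V^k w, V^k w> convex for every w. For y in the unitary part,
   y = V^N (V^*N y) for every N, and the bounded convex sequence of w = V^*N y
   has second difference <A (V^2 y - y), V^2 y - y> at N; as bounded convex
   sequences have second differences O(1/N), this vanishes, and positivity and
   injectivity of A give V^2 y = y. Thus the unitary part splits into the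
   eigenspaces of V for 1 and -1. These are A-invariant because V^* A = A V,
   and the self-adjoint A then also preserves their orthogonal complement, the
   pure part. If A V > 0, then <A x, x> = - <A V x, x> <= 0 for V x = - x,
   which forces x = 0. *)

Section Conjugation.
Variable C : numClosedFieldType.

Lemma conjCM (a b : C) : (a * b)^* = a^* * b^*. Proof. exact: rmorphM. Qed.
Lemma conjCV (a : C) : (a^-1)^* = (a^*)^-1. Proof. exact: fmorphV. Qed.

End Conjugation.

Section InnerProduct.
Variables (R : realType) (H : lmodType R[i]) (ip : H -> H -> R[i]).
Hypothesis Hip : inner_product ip.
Local Notation C := (R[i]).
Local Notation nsq := (nsq ip).

Lemma ipDZl a x y z : ip (a *: x + y) z = a * ip x z + ip y z.
Proof. by case: Hip. Qed.
Lemma ipC x y : ip y x = (ip x y)^*.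
Proof. by case: Hip. Qed.
Lemma nsq_ge0 x : 0 <= nsq x.
Proof. by case: Hip => _ _ ->. Qed.
Lemma nsq_eq0 x : nsq x = 0 -> x = 0.
Proof. by case: Hip => _ _ _; apply. Qed.

Lemma ip0l z : ip 0 z = 0.
Proof.
have := ipDZl 1 0 0 z; rewrite scaler0 addr0 mul1r.
by rewrite -{1}[ip 0 z]addr0 => /addrI <-.
Qed.
Lemma ipDl x y z : ip (x + y) z = ip x z + ip y z.
Proof. by rewrite -[x]scale1r ipDZl mul1r scale1r. Qed.
Lemma ipZl a x z : ip (a *: x) z = a * ip x z.
Proof. by rewrite -[a *: x]addr0 ipDZl ip0l addr0. Qed.
Lemma ipNl x z : ip (- x) z = - ip x z.
Proof. by rewrite -scaleN1r ipZl mulN1r. Qed.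
Lemma ipBl x y z : ip (x - y) z = ip x z - ip y z.
Proof. by rewrite ipDl ipNl. Qed.
Lemma ip0r z : ip z 0 = 0.
Proof. by rewrite ipC ip0l conjC0. Qed.
Lemma ipDr x y z : ip z (x + y) = ip z x + ip z y.
Proof. by rewrite !(ipC _ z) ipDl rmorphD. Qed.
Lemma ipZr a x z : ip z (a *: x) = a^* * ip z x.
Proof. by rewrite !(ipC _ z) ipZl conjCM. Qed.
Lemma ipNr x z : ip z (- x) = - ip z x.
Proof. by rewrite !(ipC _ z) ipNl rmorphN. Qed.
Lemma ipBr x y z : ip z (x - y) = ip z x - ip z y.
Proof. by rewrite ipDr ipNr. Qed.

Lemma ip_sumZl (I : Type) (r : seq I) (c : I -> C) (v : I -> H) z :
  ip (\sum_(i <- r) c i *: v i) z = \sum_(i <- r) c i * ip (v i) z.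
Proof.
elim: r => [|p s IH]; first by rewrite !big_nil ip0l.
by rewrite !big_cons ipDl ipZl IH.
Qed.

Lemma nsq_conj x : (nsq x)^* = nsq x.
Proof. exact: geC0_conj (nsq_ge0 x). Qed.

Lemma nsq_gt0 x : x != 0 -> 0 < nsq x.
Proof. by move=> nx; rewrite lt_def nsq_ge0 andbT; apply: contra nx => /eqP/nsq_eq0 ->. Qed.

Lemma nsq0 : nsq 0 = 0.
Proof. exact: ip0l. Qed.

Lemma nsqD x y : nsq (x + y) = nsq x + nsq y + (ip x y + ip y x).
Proof. rewrite /Defs.nsq ipDl !ipDr; ring. Qed.

Lemma nsqB x y : nsq (x - y) = nsq x + nsq y - (ip x y + ip y x).
Proof. rewrite /Defs.nsq ipBl !ipBr; ring. Qed.

Lemma nsqN x : nsq (- x) = nsq x.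
Proof. by rewrite /Defs.nsq ipNl ipNr opprK. Qed.

Lemma nsqBC x y : nsq (x - y) = nsq (y - x).
Proof. by rewrite -nsqN opprB. Qed.

Lemma nsqZ a x : nsq (a *: x) = a * a^* * nsq x.
Proof. by rewrite /Defs.nsq ipZl ipZr mulrA [a * _]mulrC. Qed.

Lemma nsqD_le x y : nsq (x + y) <= nsq x *+ 2 + nsq y *+ 2.
Proof.
have <- : nsq (x + y) + nsq (x - y) = nsq x *+ 2 + nsq y *+ 2.
  by rewrite nsqD nsqB; ring.
by rewrite lerDl nsq_ge0.
Qed.

Lemma nsqD_lt u v (e : C) : 0 < e -> nsq u < e / 4%:R -> nsq v < e / 4%:R ->
  nsq (u + v) < e.
Proof.
move=> e0 hu hv; apply: le_lt_trans (nsqD_le u v) _.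
have -> : e = e / 4%:R *+ 2 + e / 4%:R *+ 2 by field.
by rewrite ltrD // ltrMn2r.
Qed.

Lemma ip_inj_r u v : (forall z, ip z u = ip z v) -> u = v.
Proof.
move=> h; apply/eqP; rewrite -subr_eq0; apply/eqP/nsq_eq0.
by rewrite /Defs.nsq ipBr h subrr.
Qed.

Lemma sesquilinear_diag_eq0 (D : H -> H -> C) :
  (forall a x y z, D (a *: x + y) z = a * D x z + D y z) ->
  (forall a x y z, D z (a *: x + y) = a^* * D z x + D z y) ->
  (forall z, D z z = 0) -> forall x y, D x y = 0.
Proof.
move=> linl linr diag0 x y.
have Dl u v z : D (u + v) z = D u z + D v z.
  by have := linl 1 u v z; rewrite scale1r mul1r.
have Dr u v z : D z (u + v) = D z u + D z v.
  by have := linr 1 u v z; rewrite scale1r conjC1 mul1r.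
have Zl a u z : D (a *: u) z = a * D u z.
  have := linl a u 0 z; rewrite addr0 => ->.
  have := linl 1 0 0 z; rewrite scaler0 addr0 mul1r.
  by rewrite -{1}[D 0 z]addr0 => /addrI <-; rewrite addr0.
have Zr a u z : D z (a *: u) = a^* * D z u.
  have := linr a u 0 z; rewrite addr0 => ->.
  have := linr 1 0 0 z; rewrite scaler0 addr0 conjC1 mul1r.
  by rewrite -{1}[D z 0]addr0 => /addrI <-; rewrite addr0.
(* polarization at x + y and x + 'i y *)
have e1 := diag0 (x + y); rewrite Dl !Dr !diag0 add0r addr0 in e1.
have e2 := diag0 (x + 'i *: y); rewrite Dl !Dr !Zl !Zr !diag0 conjCi in e2.
have : D x y * ('i *+ 2) = 0.
  rewrite -[RHS](_ : 'i * 0 - 0 = 0); last by rewrite mulr0 subrr.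
  by rewrite -{1}e1 -e2; ring.
by move/eqP; rewrite mulf_eq0 mulrn_eq0 /= (negPf (neq0Ci _)) orbF => /eqP.
Qed.

Lemma cauchy_schwarz x y : ip x y * (ip x y)^* <= nsq x * nsq y.
Proof.
have [->|ny] := eqVneq y 0; first by rewrite ip0r mul0r nsq0 mulr0.
have npos := nsq_gt0 ny.
set c := ip x y; set n := nsq y.
have key : nsq (x - (c / n) *: y) = nsq x - c * c^* / n.
  rewrite nsqB nsqZ ipZr ipZl -/c -/n (ipC x y) -/c conjCM conjCV /n nsq_conj -/n.
  by field; rewrite gt_eqF.
have := nsq_ge0 (x - (c / n) *: y); rewrite key subr_ge0.
by rewrite ler_pdivrMr.
Qed.

End InnerProduct.

Lemma ge0_lt_all_eq0 (F : numDomainType) (z : F) :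
  0 <= z -> (forall e, 0 < e -> z < e) -> z = 0.
Proof.
move=> z0 small; apply/eqP; apply: contraT => nz.
by have := small z; rewrite lt_def nz z0 ltxx => /(_ isT).
Qed.

Section LinearMap.
Variables (R : realType) (H : lmodType R[i]) (T : H -> H).
Hypothesis hT : is_linear T.

Lemma lin0 : T 0 = 0.
Proof.
have := hT 1 0 0; rewrite scaler0 addr0 scale1r.
by rewrite -{1}[T 0]addr0 => /addrI <-.
Qed.
Lemma linD x y : T (x + y) = T x + T y.
Proof. by have := hT 1 x y; rewrite !scale1r. Qed.
Lemma linZ a x : T (a *: x) = a *: T x.
Proof. by have := hT a x 0; rewrite !addr0 lin0 addr0. Qed.
Lemma linN x : T (- x) = - T x.
Proof. by rewrite -scaleN1r linZ scaleN1r. Qed.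
Lemma linB x y : T (x - y) = T x - T y.
Proof. by rewrite linD linN. Qed.
Lemma lin_sumZ (I : Type) (r : seq I) (c : I -> R[i]) (v : I -> H) :
  T (\sum_(i <- r) c i *: v i) = \sum_(i <- r) c i *: T (v i).
Proof.
elim: r => [|p s IH]; first by rewrite !big_nil lin0.
by rewrite !big_cons linD linZ IH.
Qed.

Lemma linear_iter n : is_linear (iter n T).
Proof. by elim: n => [|n IH] a x y //=; rewrite IH hT. Qed.

End LinearMap.

Section Subspaces.
Variables (R : realType) (H : lmodType R[i]) (ip : H -> H -> R[i]).
Hypothesis Hip : inner_product ip.
Local Notation C := (R[i]).
Local Notation nsq := (nsq ip).
Local Notation span := (in_closed_span ip).

Lemma ip_eq0_approx x y :
  (forall e, 0 < e -> exists w, ip w y = 0 /\ nsq (x - w) < e) -> ip x y = 0.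
Proof.
move=> approx; have y0 := nsq_ge0 Hip y.
suff: ip x y * (ip x y)^* = 0 by move/eqP; rewrite mulf_eq0 conjC_eq0 orbb => /eqP.
apply: ge0_lt_all_eq0 (mul_conjC_ge0 _) _ => e e0.
have e1 : 0 < e / (nsq y + 1) by rewrite divr_gt0 // ltr_wpDl.
have [w [wy0 xw]] := approx _ e1.
have -> : ip x y = ip (x - w) y by rewrite (ipBl Hip) wy0 subr0.
apply: le_lt_trans (cauchy_schwarz Hip _ _) _.
apply: le_lt_trans (_ : e / (nsq y + 1) * nsq y < e).
  by rewrite ler_wpM2r // ltW.
by rewrite mulrAC ltr_pdivrMr ?ltr_wpDl // ltr_pM2l // ltrDl.
Qed.

Lemma span_approx F x :
  (forall e, 0 < e -> exists w, span F w /\ nsq (x - w) < e) -> span F x.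
Proof.
move=> approx e e0.
have e4 : 0 < e / 4%:R by rewrite divr_gt0 // ltr0n.
have [w [Fw xw]] := approx _ e4.
have [s [sF ws]] := Fw _ e4.
exists s; split => //.
rewrite -[x](subrK w) -addrA.
exact: (nsqD_lt Hip).
Qed.

Lemma span_sub (F : H -> Prop) x : F x -> span F x.
Proof.
move=> Fx e e0; exists [:: (1, x)]; split; first by move=> p; rewrite inE => /eqP ->.
by rewrite big_seq1 scale1r subrr (nsq0 Hip).
Qed.

Lemma span0 F : span F 0.
Proof. by move=> e e0; exists [::]; rewrite big_nil subrr (nsq0 Hip). Qed.

Lemma spanDZ F a x y : span F x -> span F y -> span F (a *: x + y).
Proof.
move=> Fx Fy e e0.
set K := a * a^*.
have K0 : 0 <= K := mul_conjC_ge0 a.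
have e4 : 0 < e / 4%:R by rewrite divr_gt0 // ltr0n.
have e4K : 0 < e / 4%:R / (K + 1) by rewrite divr_gt0 // ltr_wpDl.
have [s [sF xs]] := Fx _ e4K.
have [t [tF yt]] := Fy _ e4.
exists ([seq (a * p.1, p.2) | p <- s] ++ t); split.
  move=> p; rewrite mem_cat => /orP[/mapP [q qs ->]|pt]; [exact: (sF q) | exact: tF].
rewrite big_cat big_map /=.
have -> : \sum_(p <- s) (a * p.1) *: p.2 = a *: \sum_(p <- s) p.1 *: p.2.
  by rewrite scaler_sumr; apply: eq_bigr => p _; rewrite scalerA.
rewrite opprD addrACA -scalerBr.
apply: (nsqD_lt Hip) => //; rewrite (nsqZ Hip) -/K.
apply: le_lt_trans (_ : _ <= (K + 1) * nsq (x - \sum_(p <- s) p.1 *: p.2)) _.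
  by rewrite ler_wpM2r ?(nsq_ge0 Hip) // lerDl.
by rewrite mulrC -ltr_pdivlMr // ltr_wpDl.
Qed.

Lemma span_sumZ F (s : seq (C * H)) :
  (forall p, p \in s -> span F p.2) -> span F (\sum_(p <- s) p.1 *: p.2).
Proof.
elim: s => [|p s IH] sF; first by rewrite big_nil; apply: span0.
rewrite big_cons; apply: spanDZ; first by apply: sF; rewrite mem_head.
by apply: IH => q qs; apply: sF; rewrite in_cons qs orbT.
Qed.

Lemma span_map (F G : H -> Prop) (T : H -> H) x :
  is_linear T -> (forall z, nsq (T z) <= nsq z) ->
  (forall y, F y -> span G (T y)) -> span F x -> span G (T x).
Proof.
move=> hT contr FG Fx; apply: span_approx => e e0.
have [s [sF xs]] := Fx _ e0.
exists (\sum_(p <- [seq (q.1, T q.2) | q <- s]) p.1 *: p.2); split.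
  by apply: span_sumZ => p /mapP [q qs ->]; apply/FG/sF.
rewrite big_map /= -(lin_sumZ hT) -(linB hT).
exact: le_lt_trans (contr _) xs.
Qed.

Lemma closed_subspace_span F : closed_subspace ip (span F).
Proof.
split; first by split; [exact: span0 | move=> a x y; apply: spanDZ].
move=> u x Fu ux; apply: span_approx => e e0.
have [N uN] := ux _ e0.
by exists (u N); split => //; rewrite (nsqBC Hip); apply: uN.
Qed.

Lemma closed_kernel (T : H -> H) (K : C) : is_linear T -> 0 <= K ->
  (forall z, nsq (T z) <= K * nsq z) -> closed_set ip (fun x => T x = 0).
Proof.
move=> hT K0 TK u x Tu ux; apply: (nsq_eq0 Hip).
apply: ge0_lt_all_eq0 (nsq_ge0 Hip _) _ => e e0.
have e1 : 0 < e / (K + 1) by rewrite divr_gt0 // ltr_wpDl.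
have [N uNx] := ux _ e1.
have -> : T x = - T (u N - x) by rewrite (linB hT) Tu sub0r opprK.
rewrite (nsqN Hip); apply: le_lt_trans (TK _) _.
apply: le_lt_trans (_ : _ <= (K + 1) * nsq (u N - x)) _.
  by rewrite ler_wpM2r ?(nsq_ge0 Hip) // lerDl.
by rewrite mulrC -ltr_pdivlMr ?ltr_wpDl // uNx.
Qed.

End Subspaces.

(* The order of R[i] is partial, but nonnegative elements are real: the
   arguments that need completeness or archimedeanity are carried out in R. *)
Section ComplexOrder.
Variable R : realType.
Local Notation C := (R[i]).

Lemma ge0_ReK (z : C) : 0 <= z -> (complex.Re z)%:C%C = z.
Proof. by move=> z0; apply/RRe_real/ger0_real. Qed.

Lemma ge0_bounded_multiples_eq0 (z B : C) :
  0 <= z -> (forall N, N.+1%:R * z <= B) -> z = 0.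
Proof.
move=> z0 bounded.
have B0 : 0 <= B by apply: le_trans (bounded 0%N); rewrite mulr_ge0.
rewrite -(ge0_ReK z0) -(ge0_ReK B0) in bounded *.
set r := complex.Re z in bounded *; set b := complex.Re B in bounded *.
have r0 : 0 <= r by rewrite -lecR ge0_ReK.
have b0 : 0 <= b by rewrite -lecR ge0_ReK.
have [->//|nr0] := eqVneq r 0.
have rpos : 0 < r by rewrite lt_def nr0 r0.
have := archi_boundP (divr_ge0 b0 r0); rewrite ltr_pdivrMr //.
set N := Num.Def.archi_bound _ => bN.
have cN : ((N.+1%:R : R)%:C)%C = N.+1%:R := rmorph_nat _ _.
have := bounded N; rewrite -cN -rmorphM lecR => Nb.
have : b < b by apply: lt_le_trans bN (le_trans _ Nb); rewrite ler_wpM2r // ler_nat.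
by rewrite ltxx.
Qed.

Lemma nonincreasing_ge0_cauchy (a : nat -> C) :
  (forall n, 0 <= a n) -> (forall m n, (m <= n)%N -> a n <= a m) ->
  forall e, 0 < e -> exists N, forall m n, (N <= m <= n)%N -> a m - a n < e.
Proof.
move=> a0 amono e e0.
pose r n := complex.Re (a n).
have rK n : (r n)%:C%C = a n by apply/ge0_ReK.
have r0 n : 0 <= r n by rewrite -lecR rK.
pose S := [set r n | n in [set: nat]]%classic.
have infS : has_inf S.
  by split; [exists (r 0%N), 0%N | exists 0 => _ [n _ <-]].
have eK := ge0_ReK (ltW e0).
have er0 : 0 < complex.Re e by rewrite -ltcR eK.
have [_ [N _ <-] rN] := inf_adherent er0 infS.
exists N => m n /andP [Nm mn].
have Sn : (inf S <= r n)%R by apply: ge_inf; [case: infS | exists n].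
have rmN : (r m <= r N)%R by rewrite -lecR !rK amono.
rewrite -!rK -eK -rmorphB ltcR; lra.
Qed.

End ComplexOrder.

(* The slopes d k = f k.+1 - f k increase, so N.+1 times d N.+1 - d N is at
   most the increment of f over [N.+1, 2 N.+2] minus that over [0, N.+1]. *)
Lemma convex_bounded_second_diff (F : numDomainType) (f : nat -> F) (M : F) N :
  (forall k, 0 <= f k) -> (forall k, f k <= M) ->
  (forall k, 0 <= f k.+2 - f k.+1 *+ 2 + f k) ->
  N.+1%:R * (f N.+2 - f N.+1 *+ 2 + f N) <= M *+ 2.
Proof.
move=> f0 fM convex.
pose d k := f k.+1 - f k.
have d_mono : {homo d : i j / (i <= j)%N >-> i <= j}.
  apply: homo_leq => [x|y x z|k]; [exact: lexx | exact: le_trans |].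
  by rewrite -subr_ge0; move: (convex k); congr (_ <= _); rewrite /d; ring.
set n := N.+1.
have late : d n *+ n <= f (n + n) - f n.
  rewrite -telescope_sumr ?leq_addr // -{2}(addnK n n) -sumr_const_nat.
  by apply: ler_sum_nat => k /andP [nk _]; apply: d_mono.
have early : f n - f 0 <= d N *+ n.
  rewrite -telescope_sumr // -[X in _ *+ X]subn0 -sumr_const_nat.
  by apply: ler_sum_nat => k /andP [_ kn]; apply: d_mono.
have -> : f N.+2 - f N.+1 *+ 2 + f N = d n - d N by rewrite /d; ring.
rewrite mulr_natl mulrnBl; apply: le_trans (lerB late early) _.
have -> : f (n + n) - f n - (f n - f 0) = f (n + n) + f 0 - f n *+ 2 by ring.
rewrite lerBlDr mulr2n; apply: le_trans (lerD (fM _) (fM _)) _.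
by rewrite lerDl mulrn_wge0.
Qed.

Section Isometry.
Variables (R : realType) (H : lmodType R[i]) (ip : H -> H -> R[i]).
Hypothesis Hip : inner_product ip.
Local Notation C := (R[i]).
Local Notation nsq := (nsq ip).
Variables (V Vs : H -> H).
Hypothesis HV : isometry_op ip V.
Hypothesis HVs : is_adjoint ip V Vs.

Lemma V_linear : is_linear V. Proof. by case: HV => [[]]. Qed.
Lemma nsqV x : nsq (V x) = nsq x. Proof. by case: HV. Qed.

Lemma ipV x y : ip (V x) (V y) = ip x y.
Proof.
apply/eqP; rewrite -subr_eq0; apply/eqP; move: x y.
apply: (@sesquilinear_diag_eq0 _ _ (fun x y => ip (V x) (V y) - ip x y)).
- by move=> a u v z; rewrite V_linear !(ipDZl Hip); ring.
- by move=> a u v z; rewrite V_linear !(ipDr Hip) !(ipZr Hip); ring.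
- by move=> z; rewrite [ip (V z) _]nsqV subrr.
Qed.

Lemma VsK x : Vs (V x) = x.
Proof. by apply: (ip_inj_r Hip) => z; rewrite -HVs ipV. Qed.

Lemma Vs_linear : is_linear Vs.
Proof.
move=> a u v; apply: (ip_inj_r Hip) => z.
by rewrite -HVs (ipDr Hip) (ipZr Hip) !HVs -(ipZr Hip) -(ipDr Hip).
Qed.

Lemma Vs_subVVs u : Vs (u - V (Vs u)) = 0.
Proof. by rewrite (linB Vs_linear) VsK subrr. Qed.

(* Pythagoras for the decomposition ran V (+) ker V^*. *)
Lemma nsq_VVs_split z : nsq z = nsq (Vs z) + nsq (z - V (Vs z)).
Proof.
have orth : ip (V (Vs z)) (z - V (Vs z)) = 0 by rewrite HVs Vs_subVVs (ip0r Hip).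
have {1}-> : z = V (Vs z) + (z - V (Vs z)) by rewrite addrC subrK.
rewrite (nsqD Hip) orth (ipC Hip) orth conjC0.
by rewrite !addr0 nsqV.
Qed.

Lemma nsqVs_le z : nsq (Vs z) <= nsq z.
Proof. by rewrite [leRHS]nsq_VVs_split lerDl (nsq_ge0 Hip). Qed.

Lemma nsq_subVVs_le z : nsq (z - V (Vs z)) <= nsq z.
Proof. by rewrite [leRHS]nsq_VVs_split lerDr (nsq_ge0 Hip). Qed.

Lemma ip_iterV n x y : ip (iter n V x) (iter n V y) = ip x y.
Proof. by elim: n => //= n IH; rewrite ipV. Qed.

Lemma nsq_iterV n x : nsq (iter n V x) = nsq x.
Proof. exact: ip_iterV. Qed.

Lemma adjoint_iter n x y : ip (iter n V x) y = ip x (iter n Vs y).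
Proof. by elim: n y => //= n IH y; rewrite HVs IH -iterSr. Qed.

Lemma iterVsK n x : iter n Vs (iter n V x) = x.
Proof. by elim: n x => // n IH x; rewrite iterSr iterS VsK IH. Qed.

Lemma nsq_iterVs_le n z : nsq (iter n Vs z) <= nsq z.
Proof. by elim: n => //= n IH; apply: le_trans (nsqVs_le _) IH. Qed.

Lemma V_eigen_of_Vs w (s : C) : Vs w = s *: w -> `|s| = 1 -> V w = s^* *: w.
Proof.
move=> ws su; have s1 : s * s^* = 1 by rewrite -normCK su expr1n.
apply/eqP; rewrite -subr_eq0; apply/eqP/(nsq_eq0 Hip).
rewrite (nsqB Hip) nsqV (nsqZ Hip) (ipZr Hip) HVs ws (ipZr Hip) conjCK.
rewrite (ipZl Hip) (ipC Hip (V w)) HVs ws (ipZr Hip) conjCM conjCK.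
rewrite -/(Defs.nsq ip w) (nsq_conj Hip).
have -> m : m + s^* * s * m - (s * (s^* * m) + s^* * (s * m)) = m * (1 - s * s^*).
  by ring.
by rewrite s1 subrr mulr0.
Qed.

Lemma Vs_eigen_of_V y (s : C) : V y = s *: y -> `|s| = 1 -> Vs y = s^* *: y.
Proof.
move=> ys su; have {1}-> : y = s^* *: V y.
  by rewrite ys scalerA mulrC -normCK su expr1n scale1r.
by rewrite (linZ Vs_linear) VsK.
Qed.

Lemma iterVs_eigen n y (s : C) :
  V y = s *: y -> `|s| = 1 -> iter n Vs y = (s^* ^+ n) *: y.
Proof.
move=> ys su; elim: n => [|n IH] /=; first by rewrite scale1r.
by rewrite IH (linZ Vs_linear) (Vs_eigen_of_V ys su) scalerA exprS mulrC.
Qed.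

(* [Qn n] is the orthogonal projection V^n V^*n onto the range of V^n. *)
Definition Qn n x := iter n V (iter n Vs x).

Lemma Qn_linear n : is_linear (Qn n).
Proof.
by move=> a x y; rewrite /Qn (linear_iter Vs_linear n) (linear_iter V_linear n).
Qed.

Lemma QnK m n x : (m <= n)%N -> Qn m (Qn n x) = Qn n x.
Proof. by move=> mn; rewrite /Qn -(subnKC mn) !iterD iterVsK. Qed.

Lemma QnKr m n x : (m <= n)%N -> Qn n (Qn m x) = Qn n x.
Proof. by move=> mn; rewrite /Qn -(subnK mn) !iterD iterVsK. Qed.

Lemma nsqQn_le n z : nsq (Qn n z) <= nsq z.
Proof. by rewrite /Qn nsq_iterV nsq_iterVs_le. Qed.

Lemma Qn_selfadjoint n u v : ip u (Qn n v) = ip (Qn n u) v.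
Proof. by rewrite /Qn (ipC Hip) !adjoint_iter -(ipC Hip). Qed.

Lemma nsq_subQn m n x : (m <= n)%N ->
  nsq (Qn m x - Qn n x) = nsq (Qn m x) - nsq (Qn n x).
Proof.
move=> mn.
have e : ip (Qn m x) (Qn n x) = nsq (Qn n x).
  by rewrite Qn_selfadjoint QnKr // [RHS]Qn_selfadjoint QnK.
by rewrite (nsqB Hip) (ipC Hip (Qn m x)) e (nsq_conj Hip); ring.
Qed.

Lemma Qn_cauchy x : cauchy_seq ip (fun n => Qn n x).
Proof.
have mono m n : (m <= n)%N -> nsq (Qn n x) <= nsq (Qn m x).
  by move=> mn; rewrite -subr_ge0 -nsq_subQn // (nsq_ge0 Hip).
move=> e /(nonincreasing_ge0_cauchy (fun n => nsq_ge0 Hip (Qn n x)) mono) [N cauchy].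
exists N => m n Nm Nn.
wlog mn : m n Nm Nn / (m <= n)%N.
  by move=> wlog_mn; case: (leqP m n) => [|/ltnW] mn; [|rewrite (nsqBC Hip)]; apply: wlog_mn.
by rewrite nsq_subQn // cauchy // Nm.
Qed.

Lemma Qn_limit_fixed x y : converges ip (fun n => Qn n x) y -> forall m, Qn m y = y.
Proof.
move=> xy m; apply/eqP; rewrite -subr_eq0; apply/eqP/(nsq_eq0 Hip).
apply: ge0_lt_all_eq0 (nsq_ge0 Hip _) _ => e e0.
have e4 : 0 < e / 4%:R by rewrite divr_gt0 // ltr0n.
have [N QNy] := xy _ e4.
set n := maxn m N.
have -> : Qn m y - y = Qn m (y - Qn n x) + (Qn n x - y).
  by rewrite (linB (Qn_linear m)) QnK ?leq_maxl // addrA subrK.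
apply: (nsqD_lt Hip) => //; last by apply: QNy; rewrite leq_maxr.
by apply: le_lt_trans (nsqQn_le _ _) _; rewrite (nsqBC Hip); apply: QNy; rewrite leq_maxr.
Qed.

End Isometry.

Section PositiveOperator.
Variables (R : realType) (H : lmodType R[i]) (ip : H -> H -> R[i]).
Hypothesis Hip : inner_product ip.
Local Notation C := (R[i]).
Local Notation nsq := (nsq ip).
Variable A : H -> H.
Hypothesis HA : bounded_op ip A.
Hypothesis HApos : positive_op ip A.

Definition qform u := ip (A u) u.

Lemma A_linear : is_linear A. Proof. by case: HA. Qed.
Lemma qform_ge0 u : 0 <= qform u. Proof. by case: HApos => pos _; apply: pos. Qed.
Lemma A_inj : injective A. Proof. by case: HApos. Qed.

Lemma A_selfadjoint x y : ip (A x) y = ip x (A y).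
Proof.
apply/eqP; rewrite -subr_eq0; apply/eqP; move: x y.
apply: (@sesquilinear_diag_eq0 _ _ (fun x y => ip (A x) y - ip x (A y))).
- by move=> a u v z; rewrite A_linear !(ipDZl Hip); ring.
- by move=> a u v z; rewrite A_linear !(ipDr Hip) !(ipZr Hip); ring.
- by move=> z; rewrite (ipC Hip (A z) z) (geC0_conj (qform_ge0 z)) subrr.
Qed.

Lemma A_bound : exists K : C, 0 <= K /\ forall x, nsq (A x) <= K * nsq x.
Proof.
case: HA => _ [M AM]; exists `|M|; split => // x.
have [x0|nx0] := eqVneq x 0; first by rewrite x0 (lin0 A_linear) (nsq0 Hip) !mulr0.
have M0 : 0 <= M.
  by rewrite -(pmulr_lge0 _ (nsq_gt0 Hip nx0)); apply: le_trans (nsq_ge0 Hip _) (AM x).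
by rewrite ger0_norm.
Qed.

Lemma qform_le : exists K : C, 0 <= K /\ forall u, qform u <= K * nsq u.
Proof.
have [K [K0 AK]] := A_bound.
exists (K + 1); split => [|u]; first by rewrite addr_ge0.
have := nsq_ge0 Hip (A u - u).
rewrite (nsqB Hip) subr_ge0 (ipC Hip (A u) u) (geC0_conj (qform_ge0 u)) -mulr2n => q2.
apply: le_trans (le_trans _ q2) _; first by rewrite mulr2n lerDl qform_ge0.
by rewrite mulrDl mul1r lerD2r AK.
Qed.

(* For w = A z, the form at z - t w equals t (t <A w, w> - 2 |w|^2), which is
   negative for small t > 0 unless w = 0. *)
Lemma qform_eq0 z : qform z = 0 -> A z = 0.
Proof.
move=> qz0; set w := A z; set N := nsq w; set q := qform w.
have at_t t : t^* = t -> qform (z - t *: w) = t * (t * q - N *+ 2).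
  move=> tr; rewrite /qform (linB A_linear) (linZ A_linear) (ipBl Hip) !(ipBr Hip).
  rewrite (ipZl Hip) !(ipZr Hip) (ipZl Hip) tr -/(qform z) qz0 -/w -/(qform w) -/q.
  by rewrite A_selfadjoint -/w -/(Defs.nsq ip w) -/N; ring.
apply: (nsq_eq0 Hip); apply: ge0_lt_all_eq0 (nsq_ge0 Hip _) _ => e e0.
have t0 : 0 < e / (q + 1) by rewrite divr_gt0 // ltr_wpDl ?qform_ge0.
have := qform_ge0 (z - (e / (q + 1)) *: w).
rewrite at_t; last exact/geC0_conj/ltW.
rewrite pmulr_rge0 // subr_ge0 => Nq.
apply: le_lt_trans (_ : N <= N *+ 2) _; first by rewrite mulr2n lerDl nsq_ge0.
apply: le_lt_trans Nq _.
by rewrite mulrAC ltr_pdivrMr ?ltr_wpDl ?qform_ge0 // ltr_pM2l // ltrDl.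
Qed.

End PositiveOperator.

Section HankelOperator.
Variables (R : realType) (H : lmodType R[i]) (ip : H -> H -> R[i]).
Hypothesis Hip : inner_product ip.
Local Notation C := (R[i]).
Local Notation nsq := (nsq ip).
Variables (V Vs A : H -> H).
Hypothesis HV : isometry_op ip V.
Hypothesis HVs : is_adjoint ip V Vs.
Hypothesis HA : bounded_op ip A.
Hypothesis HApos : positive_op ip A.
Hypothesis Hhankel : forall x, Vs (A x) = A (V x).
Local Notation qform := (qform ip A).

Lemma qform_second_diff u :
  qform (V (V u) - u) = qform (V (V u)) - qform (V u) *+ 2 + qform u.
Proof.
have h1 : ip (A (V u)) (V u) = ip (A u) (V (V u)).
  by rewrite -Hhankel (ipC Hip) -HVs -(ipC Hip).
have h2 : ip (A (V (V u))) u = ip (A u) (V (V u)).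
  by rewrite -!Hhankel (ipC Hip) -!HVs -(ipC Hip).
by rewrite /qform (linB (A_linear HA)) (ipBl Hip) !(ipBr Hip) h1 h2; ring.
Qed.

Lemma A_eigen x (s : C) : V x = s *: x -> `|s| = 1 -> V (A x) = s^* *: A x.
Proof.
move=> xs su; apply: (V_eigen_of_Vs Hip HV HVs) => //.
by rewrite Hhankel xs (linZ (A_linear HA)).
Qed.

Lemma unitary_part_involutive y : (forall m, Qn V Vs m y = y) -> V (V y) = y.
Proof.
move=> yQ; have [K [K0 qK]] := qform_le Hip HA HApos.
have qdiff0 : qform (V (V y) - y) = 0.
  apply: (@ge0_bounded_multiples_eq0 _ _ ((K * nsq y) *+ 2)) => [|N].
    exact: qform_ge0.
  pose w := iter N Vs y; pose f k := qform (iter k V w).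
  have wy : iter N V w = y := yQ N.
  have -> : qform (V (V y) - y) = f N.+2 - f N.+1 *+ 2 + f N.
    by rewrite /f /= wy qform_second_diff.
  apply: convex_bounded_second_diff => k; first exact: qform_ge0.
    apply: le_trans (qK _) _.
    by rewrite ler_wpM2l // (nsq_iterV Hip HV) (nsq_iterVs_le Hip HV HVs).
  by rewrite /f /= -qform_second_diff qform_ge0.
apply/eqP; rewrite -subr_eq0; apply/eqP/(A_inj HApos).
by rewrite (qform_eq0 Hip HA HApos qdiff0) (lin0 (A_linear HA)).
Qed.

Lemma AV_pos_eigenN1_eq0 x : positive_op ip (fun x => A (V x)) -> V x = - x -> x = 0.
Proof.
case=> AVpos _ xN.
have qx : qform x <= 0.
  by have := AVpos x; rewrite xN (linN (A_linear HA)) (ipNl Hip) oppr_ge0.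
have q0 : qform x = 0 by apply/eqP; rewrite eq_le qx qform_ge0.
by apply: (A_inj HApos); rewrite (qform_eq0 Hip HA HApos q0) (lin0 (A_linear HA)).
Qed.

End HankelOperator.

Section GramSchmidt.
Variables (R : realType) (H : lmodType R[i]) (ip : H -> H -> R[i]).
Hypothesis Hip : inner_product ip.
Local Notation nsq := (nsq ip).
Variable g : nat -> H.

(* A vector lying in the span of [fs] is sent to 0, so the output of the
   process is orthonormal once its zero vectors are discarded. *)
Definition gs_step (fs : seq H) (v : H) : H :=
  let r := v - \sum_(f <- fs) ip v f *: f in
  if r == 0 then 0 else (sqrtC (nsq r))^-1 *: r.

Fixpoint gs_seq n := if n is m.+1 then rcons (gs_seq m) (gs_step (gs_seq m) (g m)) else [::].

Definition gs n := gs_step (gs_seq n) (g n).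

Definition gs_res n := g n - \sum_(k <- iota 0 n) ip (g n) (gs k) *: gs k.

Lemma gsE n : gs n = if gs_res n == 0 then 0 else (sqrtC (nsq (gs_res n)))^-1 *: gs_res n.
Proof.
have gs_seqE : gs_seq n = mkseq gs n by elim: n => // n IH; rewrite mkseqS /= -IH.
by rewrite /gs gs_seqE /gs_step /gs_res /mkseq big_map.
Qed.

Lemma g_decomp n :
  g n = sqrtC (nsq (gs_res n)) *: gs n + \sum_(k <- iota 0 n) ip (g n) (gs k) *: gs k.
Proof.
rewrite gsE; case: eqP => [r0|/eqP rn0].
  by rewrite scaler0 add0r; apply/eqP; rewrite -subr_eq0 -/(gs_res n) r0.
rewrite scalerA mulfV ?scale1r ?subrK // sqrtC_eq0.
by apply: contra rn0 => /eqP/(nsq_eq0 Hip) ->.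
Qed.

Lemma gs_normed i : gs i != 0 -> ip (gs i) (gs i) = 1.
Proof.
rewrite gsE; have [_|r0 _] := eqVneq (gs_res i) 0; first by rewrite eqxx.
set r := gs_res i in r0 *.
have spos : 0 < sqrtC (nsq r) by rewrite sqrtC_gt0 nsq_gt0.
rewrite -/(Defs.nsq ip _) (nsqZ Hip) conjCV (geC0_conj (ltW spos)) -expr2 exprVn sqrtCK.
by rewrite mulVf // gt_eqF // nsq_gt0.
Qed.

Lemma gs_orth_lt i j : (j < i)%N -> ip (gs i) (gs j) = 0.
Proof.
elim/ltn_ind: i j => i IH j ji.
suff rj : ip (gs_res i) (gs j) = 0.
  by rewrite gsE; case: eqP => _; [rewrite (ip0l Hip) | rewrite (ipZl Hip) rj mulr0].
rewrite /gs_res (ipBl Hip) (ip_sumZl Hip) (bigD1_seq j) ?mem_iota ?iota_uniq //=.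
rewrite big1_seq ?addr0 => [|k /andP [kj]]; last first.
  rewrite mem_iota add0n => ki.
  case: (ltngtP k j) kj => // [kj _|jk _].
    by rewrite (ipC Hip (gs j)) IH // conjC0 mulr0.
  by rewrite IH // mulr0.
have [->|gj0] := eqVneq (gs j) 0; first by rewrite !(ip0r Hip) mulr0 subrr.
by rewrite gs_normed // mulr1 subrr.
Qed.

Lemma gs_orth i j : i != j -> ip (gs i) (gs j) = 0.
Proof.
case: (ltngtP i j) => // [ij|ji] _; last exact: gs_orth_lt.
by rewrite (ipC Hip) gs_orth_lt // conjC0.
Qed.

Lemma gs_kernel (T : H -> H) : is_linear T -> (forall n, T (g n) = 0) ->
  forall n, T (gs n) = 0.
Proof.
move=> hT Tg; elim/ltn_ind => n IH.
rewrite gsE; case: eqP => _; first exact: lin0 hT.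
rewrite (linZ hT) [T (gs_res n)](linB hT) (lin_sumZ hT) Tg.
rewrite big1_seq ?subr0 ?scaler0 // => k /andP [_].
by rewrite mem_iota add0n => kn; rewrite IH ?scaler0.
Qed.

Lemma g_in_span n : in_closed_span ip (fun y => exists i, gs i != 0 /\ y = gs i) (g n).
Proof.
have gs_in i : in_closed_span ip (fun y => exists i, gs i != 0 /\ y = gs i) (gs i).
  have [->|gi0] := eqVneq (gs i) 0; first exact: span0.
  by apply: (span_sub Hip); exists i.
rewrite g_decomp; apply: (spanDZ Hip) => //.
rewrite -(big_map (fun k => (ip (g n) (gs k), gs k)) xpredT (fun p => p.1 *: p.2)).
by apply: (span_sumZ Hip) => p /mapP [k _ ->]; apply: gs_in.
Qed.

End GramSchmidt.

Section WoldDecomposition.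
Variables (R : realType) (H : lmodType R[i]) (ip : H -> H -> R[i]).
Hypothesis Hip : inner_product ip.
Hypothesis Hcomp : complete_space ip.
Local Notation C := (R[i]).
Local Notation nsq := (nsq ip).
Local Notation span := (in_closed_span ip).
Variables (V Vs A : H -> H).
Hypothesis HV : isometry_op ip V.
Hypothesis HVs : is_adjoint ip V Vs.
Hypothesis HA : bounded_op ip A.
Hypothesis HApos : positive_op ip A.
Hypothesis Hhankel : forall x, Vs (A x) = A (V x).
Variable d : nat -> H.
Hypothesis d_dense : forall (x : H) (e : C), 0 < e -> exists k, nsq (x - d k) < e.

Definition eigen_set (s : C) x := V x = s *: x.

(* Gram-Schmidt applied to the projections of the dense sequence onto the
   wandering subspace ker V^* yields an orthonormal basis of it. *)
Definition wandering_basis := gs ip (fun k => d k - V (Vs (d k))).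

Definition shifted_basis k i := iter k V (wandering_basis i).

Definition pure_part :=
  span (fun y => exists k i, wandering_basis i != 0 /\ y = shifted_basis k i).

Lemma Vs_wandering_basis i : Vs (wandering_basis i) = 0.
Proof. exact: (gs_kernel ip (Vs_linear Hip HVs) (fun n => Vs_subVVs Hip HV HVs (d n)) i). Qed.

Lemma kerVs_span l :
  Vs l = 0 -> span (fun y => exists i, wandering_basis i != 0 /\ y = wandering_basis i) l.
Proof.
move=> Vsl; apply: (span_approx Hip) => e e0.
have [k lk] := d_dense l e0.
exists (d k - V (Vs (d k))); split; first exact: (g_in_span Hip).
have -> : l - (d k - V (Vs (d k))) = (l - d k) - V (Vs (l - d k)).
  rewrite (linB (Vs_linear Hip HVs)) Vsl sub0r (linN (V_linear HV)) opprK.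
  by rewrite opprB addrA addrAC addrC addrA [_ + l]addrC.
exact: le_lt_trans (nsq_subVVs_le Hip HV HVs _) lk.
Qed.

Lemma iterV_kerVs_pure k l : Vs l = 0 -> pure_part (iter k V l).
Proof.
move/kerVs_span; apply: (span_map Hip (linear_iter (V_linear HV) k)).
  by move=> z; rewrite (nsq_iterV Hip HV).
by move=> y [i [i0 ->]]; apply: (span_sub Hip); exists k, i.
Qed.

(* x - Q_n x = sum_(k < n) V^k (1 - V V^* ) V^*k x *)
Lemma subQn_pure x n : pure_part (x - Qn V Vs n x).
Proof.
elim: n => [|n IH]; first by rewrite /Qn subrr; apply: span0.
set u := iter n Vs x.
have -> : x - Qn V Vs n.+1 x = 1 *: (x - Qn V Vs n x) + iter n V (u - V (Vs u)).
  by rewrite scale1r (linB (linear_iter (V_linear HV) n)) /Qn iterSr iterS addrA subrK.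
by apply: (spanDZ Hip) IH _; apply/iterV_kerVs_pure/(Vs_subVVs Hip HV HVs).
Qed.

Lemma wold_decomposition x : exists x0 xp xm,
  [/\ pure_part x0, eigen_set 1 xp, eigen_set (-1) xm & x = x0 + xp + xm].
Proof.
have [y Qny] := Hcomp (Qn_cauchy Hip HV HVs x).
have VVy := unitary_part_involutive Hip HV HVs HA HApos Hhankel (Qn_limit_fixed Hip HV HVs Qny).
exists (x - y), (2^-1 *: (y + V y)), (2^-1 *: (y - V y)); split.
- apply: (span_approx Hip) => e e0.
  have [N QNy] := Qny _ e0.
  exists (x - Qn V Vs N x); split; first exact: subQn_pure.
  by rewrite opprB addrC addrA subrK; apply: QNy.
- by rewrite /eigen_set scale1r (linZ (V_linear HV)) (linD (V_linear HV)) VVy addrC.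
- by rewrite /eigen_set scaleN1r (linZ (V_linear HV)) (linB (V_linear HV)) VVy -scalerN opprB.
- rewrite -addrA -scalerDr addrACA subrr addr0 -mulr2n -[y *+ 2]scaler_nat scalerA.
  by rewrite mulVf ?pnatr_eq0 // scale1r subrK.
Qed.

Lemma closed_subspace_eigen_set s : closed_subspace ip (eigen_set s).
Proof.
split.
  split => [|a x y xs ys]; first by rewrite /eigen_set (lin0 (V_linear HV)) scaler0.
  by rewrite /eigen_set (V_linear HV) xs ys scalerDr !scalerA mulrC.
have lin : is_linear (fun z => V z - s *: z).
  by move=> a x y; rewrite (V_linear HV) scalerDr opprD addrACA scalerBr !scalerA mulrC.
have bound z : nsq (V z - s *: z) <= (2%:R + (s * s^*) *+ 2) * nsq z.
  apply: le_trans (nsqD_le Hip _ _) _.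
  by rewrite (nsqV HV) (nsqN Hip) (nsqZ Hip) le_eqVlt; apply/orP; left; apply/eqP; ring.
move=> u x us ux; apply/eqP; rewrite -subr_eq0; apply/eqP.
apply: (closed_kernel Hip lin _ bound _ ux).
  by rewrite addr_ge0 // mulrn_wge0 // mul_conjC_ge0.
by move=> n; rewrite us subrr.
Qed.

Lemma orthogonal_pure_eigen_set s :
  `|s| = 1 -> orthogonal_sets ip pure_part (eigen_set s).
Proof.
move=> su x y x0 ys.
have basis_y k i : ip (shifted_basis k i) y = 0.
  rewrite /shifted_basis (adjoint_iter HVs) (iterVs_eigen Hip HV HVs k ys su) (ipZr Hip).
  have -> : y = s^* *: V y by rewrite ys scalerA mulrC -normCK su expr1n scale1r.
  by rewrite (ipZr Hip) (ipC Hip) HVs Vs_wandering_basis (ip0r Hip) conjC0 !mulr0.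
apply: (ip_eq0_approx Hip) => e e0.
have [t [tB xt]] := x0 _ e0.
exists (\sum_(p <- t) p.1 *: p.2); split => //.
rewrite (ip_sumZl Hip) big1_seq // => p /andP [_ pt].
by have [k [i [_ ->]]] := tB p pt; rewrite basis_y mulr0.
Qed.

Lemma orthogonal_eigen_set_1N1 : orthogonal_sets ip (eigen_set 1) (eigen_set (-1)).
Proof.
move=> x y; rewrite /eigen_set scale1r scaleN1r => Vx Vy.
have := ipV Hip HV x y; rewrite Vx Vy (ipNr Hip) => /eqP.
by rewrite -subr_eq0 -opprD oppr_eq0 -mulr2n mulrn_eq0 /= => /eqP.
Qed.

Lemma ip_shifted_basis_lt k l i j :
  (k < l)%N -> ip (shifted_basis k i) (shifted_basis l j) = 0.
Proof.
move=> kl; rewrite /shifted_basis -(subnKC kl) iterD iterSr (adjoint_iter HVs).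
by rewrite (iterVsK Hip HV HVs) (ipC Hip) HVs Vs_wandering_basis (ip0r Hip) conjC0.
Qed.

Lemma pure_isometry_pure_part : pure_isometry_on ip V pure_part.
Proof.
exists (fun i => wandering_basis i != 0), shifted_basis; split => // k i l j i0 j0.
case: (ltngtP k l) => [kl|lk|<-]; first exact: ip_shifted_basis_lt.
  by rewrite (ipC Hip) ip_shifted_basis_lt // conjC0.
rewrite /shifted_basis (ip_iterV Hip HV) /=.
by case: eqVneq => [<-|ij]; [exact: gs_normed | exact: gs_orth].
Qed.

Lemma invariant_V_pure_part : invariant_set V pure_part.
Proof.
move=> x; apply: (span_map Hip (V_linear HV)) => [z|y [k [i [i0 ->]]]].
  by rewrite (nsqV HV).
by apply: (span_sub Hip); exists k.+1, i.
Qed.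

Lemma invariant_A_eigen_set s :
  `|s| = 1 -> s^* = s -> invariant_set A (eigen_set s).
Proof. by move=> su sr x xs; rewrite /eigen_set (A_eigen Hip HV HVs HA Hhankel xs su) sr. Qed.

Lemma invariant_A_pure_part : invariant_set A pure_part.
Proof.
move=> x x0; have [a0 [ap [am [a00 ap1 amN1 Ax]]]] := wold_decomposition (A x).
have Ax_orth s y : `|s| = 1 -> s^* = s -> eigen_set s y -> ip (A x) y = 0.
  move=> su sr ys; rewrite (A_selfadjoint Hip HA HApos).
  exact: orthogonal_pure_eigen_set su _ _ x0 (invariant_A_eigen_set su sr ys).
have ap0 : ap = 0.
  apply: (nsq_eq0 Hip); have := Ax_orth 1 ap (normr1 _) (conjC1 _) ap1.
  rewrite Ax !(ipDl Hip) (orthogonal_pure_eigen_set (normr1 _) a00 ap1).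
  by rewrite (ipC Hip ap am) (orthogonal_eigen_set_1N1 ap1 amN1) conjC0 add0r addr0.
have am0 : am = 0.
  apply: (nsq_eq0 Hip); have := Ax_orth (-1) am (normrN1 _) (conjCN1 _) amN1.
  rewrite Ax !(ipDl Hip) (orthogonal_pure_eigen_set (normrN1 _) a00 amN1).
  by rewrite (orthogonal_eigen_set_1N1 ap1 amN1) !add0r.
by rewrite Ax ap0 am0 !addr0.
Qed.

End WoldDecomposition.

Theorem mainTheorem6 (R : realType) (H : lmodType R[i]) (ip : H -> H -> R[i])
  (Hip : inner_product ip) (Hcomp : complete_space ip) (Hsep : separable_space ip)
  (A V Vs : H -> H)
  (HA : bounded_op ip A) (HApos : positive_op ip A)
  (HV : isometry_op ip V) (HVs : is_adjoint ip V Vs)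
  (Hhankel : forall x, Vs (A x) = A (V x)) :
  exists H0 Hp Hm : H -> Prop,
    (closed_subspace ip H0 /\ closed_subspace ip Hp /\ closed_subspace ip Hm) /\
    [/\ orthogonal_sets ip H0 Hp /\ orthogonal_sets ip H0 Hm /\ orthogonal_sets ip Hp Hm,
        (forall x, exists x0 xp xm, [/\ H0 x0, Hp xp, Hm xm & x = x0 + xp + xm]),
        invariant_set V H0 /\ pure_isometry_on ip V H0 /\
          (forall x, Hp x -> V x = x) /\ (forall x, Hm x -> V x = - x),
        invariant_set A H0 /\ invariant_set A Hp /\ invariant_set A Hm &
        (positive_op ip (fun x => A (V x)) ->
           (forall x, Hm x -> x = 0) /\ (forall x, (exists xp xm, [/\ Hp xp, Hm xm & x = xp + xm]) -> V x = x))].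
Proof.
have [d d_dense] := Hsep.
exists (pure_part ip V Vs d), (eigen_set V 1), (eigen_set V (-1)).
split; first by split; [exact: closed_subspace_span | split; exact: closed_subspace_eigen_set].
split.
- split; first exact: (orthogonal_pure_eigen_set Hip HV HVs (normr1 _)).
  split; first exact: (orthogonal_pure_eigen_set Hip HV HVs (normrN1 _)).
  exact: (orthogonal_eigen_set_1N1 Hip HV).
- exact: (wold_decomposition Hip Hcomp HV HVs HA HApos Hhankel d_dense).
- split; first exact: (invariant_V_pure_part Hip HV).
  split; first exact: (pure_isometry_pure_part Hip HV HVs d).
  by split => x; rewrite /eigen_set ?scale1r ?scaleN1r.
- split; first exact: (invariant_A_pure_part Hip Hcomp HV HVs HA HApos Hhankel d_dense).
  split; first exact: (invariant_A_eigen_set Hip HV HVs HA Hhankel (normr1 _) (conjC1 _)).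
  exact: (invariant_A_eigen_set Hip HV HVs HA Hhankel (normrN1 _) (conjCN1 _)).
- move=> AVpos; have eigenN1_0 x : eigen_set V (-1) x -> x = 0.
    by rewrite /eigen_set scaleN1r; apply: (AV_pos_eigenN1_eq0 Hip HA HApos AVpos).
  split => // _ [xp [xm [xp1 /eigenN1_0 -> ->]]].
  by rewrite addr0 xp1 scale1r.
Qed.
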